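(* Consider on $M_h$ with $2h=1$ the reduced $23$-spherical integrable system $(\ell_{34},G_{23})$, where $G_{23}=\ell_{12}^2+\ell_{13}^2+\ell_{14}^2$. The image of the momentum map $(\ell_{34},G_{23}):M_h\to\mathbb R^2$ has critical values $\mathfrak C_1: G_{23}=1-\ell_{34}^2$ and $\mathfrak C_2: G_{23}=0$, which are both codimension one elliptic.
   Context: $\mathbf L=(\ell_{12},\ell_{13},\ell_{14},\ell_{23},\ell_{24},\ell_{34})\in\mathbb R^6\cong\mathfrak{so}(4)^*$ with the Lie–Poisson bracket of $\mathfrak{so}(4)$ (extending $\ell_{ji}=-\ell_{ij}$: $\{\ell_{ij},\ell_{jk}\}=-\ell_{ik}$ for distinct $i,j,k$, and $\{\ell_{ij},\ell_{kl}\}=0$ when $\{i,j\}\cap\{k,l\}=\emptyset$). $M_h=\{\mathbf L:\sum_{i<j}\ell_{ij}^2=2h,\ \ell_{12}\ell_{34}-\ell_{13}\ell_{24}+\ell_{14}\ell_{23}=0\}\cong S^2\times S^2$ is a symplectic leaf. A codimension one elliptic critical value is one whose critical points have rank-one differential of the momentum map with an elliptic (purely imaginary eigenvalue) transverse linearisation. *)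

From HB Require Import structures.
From mathcomp Require Import all_boot all_order all_algebra.
From mathcomp Require Import complex.
From mathcomp Require Import mpoly.
From Stdlib Require Rdefinitions.
From mathcomp Require Import Rstruct.

Set Implicit Arguments.
Unset Strict Implicit.
Unset Printing Implicit Defensive.

Import Order.TTheory GRing.Theory Num.Theory.
Local Open Scope ring_scope.

(** Coordinates on R^6 = so(4)^* : index 0..5 stands for
    l12, l13, l14, l23, l24, l34 (in this order). *)
Definition Rr : rcfType := Rdefinitions.R.

Definition poly6 := {mpoly Rr[6]}.
Definition pt := 'I_6 -> Rr.

Definition i12 : 'I_6 := @Ordinal 6 0 isT.
Definition i13 : 'I_6 := @Ordinal 6 1 isT.
Definition i14 : 'I_6 := @Ordinal 6 2 isT.
Definition i23 : 'I_6 := @Ordinal 6 3 isT.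
Definition i24 : 'I_6 := @Ordinal 6 4 isT.
Definition i34 : 'I_6 := @Ordinal 6 5 isT.

Definition X (a : 'I_6) : poly6 := 'X_a.

(** the pair {i,j} (i<j, indices 0..3 for 1..4) of a coordinate *)
Definition pr (a : 'I_6) : nat * nat :=
  match val a with
  | 0 => (0, 1)%N | 1 => (0, 2)%N | 2 => (0, 3)%N
  | 3 => (1, 2)%N | 4 => (1, 3)%N | _ => (2, 3)%N
  end.

(** l_ij for arbitrary i, j in {0..3}, extended by l_ji = - l_ij, l_ii = 0 *)
Definition Lij (i j : nat) : poly6 :=
  \sum_(a < 6)
     (((pr a == (i, j)) %:R - (pr a == (j, i)) %:R) *: X a).

Definition dl (i j : nat) : Rr := (i == j)%:R.

(** Lie–Poisson bracket of so(4)^* on coordinate functions: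
    {l_ij, l_kl} = -(d_jk l_il - d_ik l_jl - d_jl l_ik + d_il l_jk),
    i.e. the bilinear antisymmetric extension of {l_ij,l_jk} = -l_ik
    (i,j,k distinct) and {l_ij,l_kl} = 0 for disjoint pairs. *)
Definition Pi (a b : 'I_6) : poly6 :=
  let: (i, j) := pr a in let: (k, l) := pr b in
  - (dl j k *: Lij i l - dl i k *: Lij j l - dl j l *: Lij i k
     + dl i l *: Lij j k).

Definition pbr (f g : poly6) : poly6 :=
  \sum_(a < 6) \sum_(b < 6) Pi a b * f^`M(a) * g^`M(b).

Definition hamvf (H : poly6) (a : 'I_6) : poly6 := pbr (X a) H.

Definition Cas1 : poly6 := \sum_(a < 6) X a ^+ 2.
Definition Cas2 : poly6 := X i12 * X i34 - X i13 * X i24 + X i14 * X i23.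

Definition inM (p : pt) : Prop := Cas1.@[p] = 1 /\ Cas2.@[p] = 0.

Definition G23 : poly6 := X i12 ^+ 2 + X i13 ^+ 2 + X i14 ^+ 2.
Definition F1 : poly6 := X i34.
Definition F2 : poly6 := G23.
Definition Fmap (p : pt) : Rr * Rr := (F1.@[p], F2.@[p]).

Definition gradcols (k : nat) (fs : 'I_k -> poly6) (p : pt) : 'M[Rr]_(6, k) :=
  \matrix_(a < 6, j < k) ((fs j)^`M(a)).@[p].

Definition Fs : 'I_2 -> poly6 := fun j => if val j == 0%N then F1 else F2.
Definition Cs : 'I_2 -> poly6 := fun j => if val j == 0%N then Cas1 else Cas2.

(** T_pM is the row space of kermx (gradient of Casimirs);
    rank of the differential of (F1,F2) restricted to T_pM *)
Definition rank_dF (p : pt) : nat :=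
  \rank (kermx (gradcols Cs p) *m gradcols Fs p).

Definition critical_point (p : pt) : Prop := inM p /\ (rank_dF p < 2)%N.

Definition critical_value (c : Rr * Rr) : Prop :=
  exists p, critical_point p /\ Fmap p = c.

Definition in_image (c : Rr * Rr) : Prop := exists p, inM p /\ Fmap p = c.

Definition rank0_value (c : Rr * Rr) : Prop :=
  exists p, inM p /\ rank_dF p = 0%N /\ Fmap p = c.

Definition linearisation (H : poly6) (p : pt) : 'M[Rr]_6 :=
  \matrix_(a < 6, b < 6) ((hamvf H a)^`M(b)).@[p].

Definition elliptic_mx (A : 'M[Rr]_6) : Prop :=
  let Ac := map_mx (fun x : Rr => (x%:C)%C) A in
  (forall z : Rr[i], eigenvalue Ac z -> complex.Re z = 0) /\
  (exists z : Rr[i], eigenvalue Ac z /\ z != 0).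

(** rank-one point p with elliptic transverse linearisation: the nontrivial
    combination H = al*F1 + be*F2 whose differential vanishes on T_pM has an
    elliptic linearisation *)
Definition elliptic_rank1_point (p : pt) : Prop :=
  rank_dF p = 1%N /\
  exists al be : Rr, (al != 0 \/ be != 0) /\
    let H := al *: F1 + be *: F2 in
    kermx (gradcols Cs p) *m gradcols (fun _ : 'I_1 => H) p = 0 /\
    elliptic_mx (linearisation H p).

Definition codim1_elliptic_value (c : Rr * Rr) : Prop :=
  forall p, critical_point p -> Fmap p = c -> elliptic_rank1_point p.

Set Warnings "-notation-overridden,-ambiguous-paths,-notation-incompatible-prefix,-deprecated".
From HB Require Import structures.
From mathcomp Require Import all_boot all_order all_algebra.
From mathcomp Require Import complex mpoly.
From mathcomp Require Import Rstruct.
From mathcomp Require Import ring lra zify.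
From Stdlib Require Import FunctionalExtensionality.
Import GRing.Theory Num.Theory.
Local Open Scope ring_scope.

(* Critical points of (l34, G23) on M_h come from Lagrange relations
   al d(l34) + be dG = ta d(Cas1) + de d(Cas2); they force either
   l23 = l24 = 0, where the first Casimir gives G = 1 - l34^2, or
   l12 = l13 = l14 = 0, where G = 0.  On the first family 2c l34 + G, with
   c the value of l34 at the point, is stationary along the leaf and its
   linearisation L satisfies L^4 = -(2c)^2 L^2; on the second G is
   stationary and L^3 = -4 L.  Hence every eigenvalue z solves
   z^k (z^2 + w^2) = 0 with w <> 0, so it is purely imaginary, and +-iw is
   an eigenvalue since L^k <> 0.  The first family meets l34 = 0 only over
   the value (0, 1), which is also taken at the rank-zero point l12 = 1. *)

Section KernelRank.
Variables (F : fieldType) (n m : nat) (C : 'M[F]_(n, m)).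

Lemma kermx_mul_eq0 k (T : 'M_(m, k)) : kermx C *m (C *m T) = 0.
Proof. by rewrite mulmxA mulmx_ker mul0mx. Qed.

Lemma colspan_of_kermx (y : 'cV_n) :
  kermx C *m y = 0 -> exists t : 'cV_m, y = C *m t.
Proof.
move=> Ky; set K := kermx C.
have sCK : (C^T <= kermx K^T)%MS by rewrite sub_kermx -trmx_mul mulmx_ker trmx0.
have eCK : (C^T == kermx K^T)%MS.
  rewrite -(mxrank_leqif_eq sCK).2 mxrank_ker !mxrank_tr /K mxrank_ker.
  by apply/eqP; have := rank_leq_row C; lia.
have : (y^T <= C^T)%MS.
  by rewrite (eqmxP eCK) sub_kermx -trmx_mul Ky trmx0.
case/submxP => D yD.
by exists D^T; rewrite -[y]trmxK yD trmx_mul trmxK.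
Qed.

Lemma rank_kermx_mul_ltP k (G : 'M_(n, k)) :
  (\rank (kermx C *m G) < k)%N <->
  exists2 w : 'cV_k, w != 0 & exists t : 'cV_m, G *m w = C *m t.
Proof.
set A := (kermx C *m G)^T; split.
  rewrite -mxrank_tr -/A => rA.
  have nzK : kermx A != 0 by rewrite kermx_eq0 /row_free neq_ltn rA.
  exists (nz_row (kermx A))^T; first by rewrite trmx_eq0 nz_row_eq0.
  apply: colspan_of_kermx; rewrite mulmxA -[_ *m G]trmxK -trmx_mul -/A.
  by have /sub_kermxP -> := nz_row_sub (kermx A); rewrite trmx0.
case=> w w0 [t Gw].
have : (w^T <= kermx A)%MS.
  by rewrite sub_kermx /A -trmx_mul -mulmxA Gw kermx_mul_eq0 trmx0.
move/mxrankS; rewrite mxrank_ker rank_rV trmx_eq0 w0 /A mxrank_tr.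
by have := rank_leq_col (kermx C *m G); lia.
Qed.

End KernelRank.

Section Eigenvalues.
Context {F : fieldType} {n : nat} {A : 'M[F]_n.+1}.

Lemma eigenvalue_of_mul_sub {m} {B : 'M_(m, n.+1)} {a} :
  B != 0 -> B *m (A - a%:M) = 0 -> eigenvalue A a.
Proof.
move=> nzB BA; rewrite /eigenvalue; apply: contra nzB => /eqP K0.
by rewrite -submx0 -K0 /eigenspace sub_kermx BA.
Qed.

Lemma eigenvector_exp {v : 'rV_n.+1} {a} k :
  v *m A = a *: v -> v *m A ^+ k = a ^+ k *: v.
Proof.
move=> vA; elim: k => [|k IHk]; first by rewrite expr0 scale1r mulmx1.
by rewrite exprSr -mulmxE mulmxA IHk -scalemxAl vA scalerA -exprSr.
Qed.

Context {k : nat} {c : F}.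
Hypothesis annihilated : A ^+ k.+2 = c *: A ^+ k.

Lemma eigenvalue_annihilated a : eigenvalue A a -> a ^+ k.+2 = c * a ^+ k.
Proof.
case/eigenvalueP=> v vA nzv; have := congr1 (mulmx v) annihilated.
rewrite -scalemxAr !(eigenvector_exp _ vA) scalerA => /eqP.
by rewrite -subr_eq0 -scalerBl scaler_eq0 (negPf nzv) orbF subr_eq0 => /eqP.
Qed.

Lemma eigenvalue_sqrt_annihilated u :
  u ^+ 2 = c -> 2%:R * u != 0 -> A ^+ k != 0 -> eigenvalue A u \/ eigenvalue A (- u).
Proof.
move=> uc nz2u nzAk.
have sqr_diff a : (A + a%:M) * (A - a%:M) = A ^+ 2 - (a ^+ 2)%:M.
  rewrite mulrDl !mulrBr -!mulmxE scalar_mxC -scalar_mxM -expr2.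
  by rewrite addrA subrK.
(* a nonzero row of A^k (A + a) is a left eigenvector for a, as A^k (A + a) (A - a) = 0 *)
have vanish : A ^+ k * (A ^+ 2 - c%:M) = 0.
  by rewrite mulrBr -exprD addn2 -mulmxE mul_mx_scalar annihilated subrr.
have eig a : a ^+ 2 = c -> A ^+ k * (A + a%:M) != 0 -> eigenvalue A a.
  move=> ac nz; apply: (eigenvalue_of_mul_sub nz).
  by rewrite mulmxE -mulrA sqr_diff ac vanish.
have [Pu|/(eig u uc)] := eqVneq (A ^+ k * (A + u%:M)) 0; last by left.
right; apply: eig; first by rewrite sqrrN.
apply: contra nzAk => /eqP Pnu.
have : A ^+ k * ((A + u%:M) - (A + (- u)%:M)) = 0 by rewrite mulrBr Pu Pnu subrr.
rewrite opprD addrACA subrr add0r raddfN opprK -raddfD -mulmxE mul_mx_scalar.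
by move/eqP; rewrite scaler_eq0 -mulr2n -mulr_natl (negPf nz2u).
Qed.

End Eigenvalues.

Lemma Re_eq0_annihilated (R : rcfType) (z : R[i]) (w : R) k :
  z ^+ k.+2 = (- w ^+ 2)%:C%C * z ^+ k -> complex.Re z = 0.
Proof.
have [->|nz] := eqVneq z 0; first by [].
rewrite -addn2 exprD [_ * z ^+ k]mulrC => /(mulfI (expf_neq0 k nz)).
case: z nz => x y _ /eqP; rewrite eq_complex /= => /andP[/eqP e1 /eqP e2].
by apply/eqP; rewrite -sqrf_eq0; apply/eqP; nra.
Qed.

Lemma elliptic_mx_annihilated {A : 'M[Rr]_6} {k w} :
  A ^+ k.+2 = - w ^+ 2 *: A ^+ k -> w != 0 -> A ^+ k != 0 -> elliptic_mx A.
Proof.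
move=> AkE nzw nzAk; rewrite /elliptic_mx.
set Ac := map_mx _ A.
have AcE : Ac ^+ k.+2 = (- w ^+ 2)%:C%C *: Ac ^+ k.
  by rewrite /Ac -!rmorphXn AkE /= map_mxZ.
split=> [z /(eigenvalue_annihilated AcE)|]; first exact: Re_eq0_annihilated.
have nzAck : Ac ^+ k != 0 by rewrite /Ac -rmorphXn map_mx_eq0.
pose u := w%:C%C * 'i%C.
have nzu : u != 0 by rewrite mulf_eq0 negb_or neq0Ci (inj_eq (@complexI _)) nzw.
have [||eu|eu] := eigenvalue_sqrt_annihilated AcE u _ _ nzAck.
- by rewrite exprMn sqrCi mulrN1 rmorphN rmorphXn.
- by rewrite mulf_neq0 ?pnatr_eq0.
- by exists u.
- by exists (- u); rewrite oppr_eq0.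
Qed.

Definition mkpt {T : Type} (x0 x1 x2 x3 x4 x5 : T) (a : 'I_6) : T :=
  match val a with 0 => x0 | 1 => x1 | 2 => x2 | 3 => x3 | 4 => x4 | _ => x5 end.

Ltac ord6_cases a := case: a => [[|[|[|[|[|[|//]]]]]] ?].

Lemma mkpt_eta (p : pt) : p = mkpt (p i12) (p i13) (p i14) (p i23) (p i24) (p i34).
Proof.
by apply: functional_extensionality => a; ord6_cases a;
  congr p; apply: val_inj.
Qed.

Lemma mderiv_X (a b : 'I_6) : (X a)^`M(b) = ((a == b)%:R)%:MP.
Proof.
rewrite /X mderivX mnm1E; case: eqP => [->|_]; last by rewrite scale0r mpolyC0.
have -> : (U_(b) - U_(b))%MM = 0%MM.
  by apply/mnmP => i; rewrite mnmBE mnm0E subnn.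
by rewrite mpolyX0 scale1r.
Qed.

Lemma meval_X (p : pt) a : (X a).@[p] = p a.
Proof. exact: mevalXU. Qed.

Ltac mpoly_simpl :=
  rewrite ?(mderivD, mderivB, mderivN, mderivZ, mderivM, mderiv_X, mderivC, expr2,
            mevalD, mevalB, mevalN, mevalZ, mevalM, mevalC, meval_X) /= ?/mkpt /=.

Section PointCalculus.
Variables x0 x1 x2 x3 x4 x5 : Rr.
Local Notation x := (mkpt x0 x1 x2 x3 x4 x5).

Lemma meval_Cas1 : Cas1.@[x] = x0^+2 + x1^+2 + x2^+2 + x3^+2 + x4^+2 + x5^+2.
Proof. rewrite /Cas1 !big_ord_recl big_ord0; mpoly_simpl; ring. Qed.

Lemma meval_Cas2 : Cas2.@[x] = x0 * x5 - x1 * x4 + x2 * x3.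
Proof. rewrite /Cas2; mpoly_simpl; ring. Qed.

Lemma meval_F1 : F1.@[x] = x5.
Proof. by rewrite /F1; mpoly_simpl. Qed.

Lemma meval_F2 : F2.@[x] = x0^+2 + x1^+2 + x2^+2.
Proof. rewrite /F2 /G23; mpoly_simpl; ring. Qed.

Lemma grad_Cas1 a : (Cas1^`M(a)).@[x] = 2 * x a.
Proof.
rewrite /Cas1 !big_ord_recl big_ord0; mpoly_simpl.
by ord6_cases a; rewrite /mkpt /=; ring.
Qed.

Lemma grad_Cas2 a : (Cas2^`M(a)).@[x] = mkpt x5 (- x4) x3 x2 (- x1) x0 a.
Proof. rewrite /Cas2; mpoly_simpl; by ord6_cases a; rewrite /mkpt /=; ring. Qed.

Lemma grad_F1 a : (F1^`M(a)).@[x] = mkpt 0 0 0 0 0 1 a.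
Proof. by rewrite /F1; ord6_cases a; mpoly_simpl. Qed.

Lemma grad_F2 a : (F2^`M(a)).@[x] = mkpt (2 * x0) (2 * x1) (2 * x2) 0 0 0 a.
Proof. rewrite /F2 /G23; mpoly_simpl; by ord6_cases a; rewrite /mkpt /=; ring. Qed.

Lemma grad_comb al be a :
  ((al *: F1 + be *: F2)^`M(a)).@[x] =
  mkpt (2 * be * x0) (2 * be * x1) (2 * be * x2) 0 0 al a.
Proof.
rewrite mderivD !mderivZ mevalD !mevalZ grad_F1 grad_F2.
by ord6_cases a; rewrite /mkpt /=; ring.
Qed.

Lemma hessian_comb al be a b :
  (((al *: F1 + be *: F2)^`M(a))^`M(b)).@[x] =
  mkpt (2 * be) (2 * be) (2 * be) 0 0 0 a * (a == b)%:R.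
Proof.
rewrite !(mderivD, mderivZ) /F1 mderiv_X mderivC scaler0 add0r mevalZ /F2 /G23.
mpoly_simpl; by ord6_cases a; ord6_cases b; rewrite /mkpt /=; ring.
Qed.

End PointCalculus.

Definition Lij_coef (i j : nat) (c : 'I_6) : Rr :=
  (pr c == (i, j))%:R - (pr c == (j, i))%:R.

Definition Pi_coef (a b c : 'I_6) : Rr :=
  let: (i, j) := pr a in let: (k, l) := pr b in
  - (dl j k * Lij_coef i l c - dl i k * Lij_coef j l c
     - dl j l * Lij_coef i k c + dl i l * Lij_coef j k c).

Lemma meval_Lij i j (p : pt) : (Lij i j).@[p] = \sum_c Lij_coef i j c * p c.
Proof.
by rewrite /Lij (raddf_sum (meval p)) /=; apply: eq_bigr => c _; rewrite mevalZ meval_X.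
Qed.

Lemma grad_Lij i j c (p : pt) : ((Lij i j)^`M(c)).@[p] = Lij_coef i j c.
Proof.
rewrite /Lij (raddf_sum (mderiv c)) (raddf_sum (meval p)) /= (bigD1 c) //=.
rewrite big1 => [|d /negbTE dc].
  by rewrite mderivZ mevalZ mderiv_X mevalC eqxx mulr1 addr0.
by rewrite mderivZ mevalZ mderiv_X mevalC dc mulr0.
Qed.

Lemma meval_Pi a b (p : pt) : (Pi a b).@[p] = \sum_c Pi_coef a b c * p c.
Proof.
rewrite /Pi /Pi_coef; case: (pr a) => i j; case: (pr b) => k l.
by rewrite !(mevalD, mevalB, mevalN, mevalZ) !meval_Lij !big_ord_recl !big_ord0; ring.
Qed.

Lemma grad_Pi a b c (p : pt) : ((Pi a b)^`M(c)).@[p] = Pi_coef a b c.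
Proof.
rewrite /Pi /Pi_coef; case: (pr a) => i j; case: (pr b) => k l.
by rewrite !(mderivD, mderivB, mderivN, mderivZ, mevalD, mevalB, mevalN, mevalZ) !grad_Lij.
Qed.

Lemma linearisationE H (p : pt) a c :
  linearisation H p a c =
  \sum_b (Pi_coef a b c * (H^`M(b)).@[p]
          + (\sum_d Pi_coef a b d * p d) * ((H^`M(b))^`M(c)).@[p]).
Proof.
rewrite mxE /hamvf /pbr.
rewrite (bigD1 a (F := fun d => \sum_b Pi d b * (X a)^`M(d) * H^`M(b))) //=.
rewrite [X in _ + X]big1 ?addr0 => [|d da]; last first.
  by apply: big1 => b _; rewrite mderiv_X eq_sym (negbTE da) mpolyC0 mulr0 mul0r.
rewrite mderiv_X eqxx mpolyC1 (raddf_sum (mderiv c)) (raddf_sum (meval p)) /=.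
apply: eq_bigr => b _.
by rewrite mulr1 mderivM mevalD !mevalM grad_Pi meval_Pi.
Qed.

Definition linmx_C1 (y1 y2 a : Rr) : 'M[Rr]_6 := \matrix_(i, j)
  match val i, val j with
  | 0, 3 => 2 * y1 | 0, 4 => 2 * y2 | 1, 5 => 2 * y2 | 2, 5 => - (2 * y1)
  | 3, 4 => - (2 * a) | 4, 3 => 2 * a | _, _ => 0 end.

Definition linmx_C2 (y3 y4 a : Rr) : 'M[Rr]_6 := \matrix_(i, j)
  match val i, val j with
  | 0, 1 => 2 * y3 | 0, 2 => 2 * y4 | 1, 0 => - (2 * y3) | 1, 2 => 2 * a
  | 2, 0 => - (2 * y4) | 2, 1 => - (2 * a) | _, _ => 0 end.

(* Expanding the sums before splitting on the entry keeps the case analysis cheap. *)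
Ltac mx6_entrywise :=
  apply/matrixP; intros i j;
  rewrite !mxE !big_ord_recl !big_ord0 !mxE ?big_ord_recl ?big_ord0 ?mxE /=
    ?(mul0r, mulr0, addr0, add0r);
  revert i j; do 2 case=> [[|[|[|[|[|[|//]]]]]] ?]; rewrite /=.

Lemma linmx_C1_sqr y1 y2 a :
  linmx_C1 y1 y2 a ^+ 2 = \matrix_(i, j)
    match val i, val j with
    | 0, 3 => 4 * a * y2 | 0, 4 => - (4 * a * y1)
    | 3, 3 => - (4 * a ^+ 2) | 4, 4 => - (4 * a ^+ 2) | _, _ => 0 end.
Proof. by rewrite expr2 -mulmxE; mx6_entrywise; ring. Qed.

Lemma linmx_C1_annihilated y1 y2 a :
  linmx_C1 y1 y2 a ^+ 4 = - (2 * a) ^+ 2 *: linmx_C1 y1 y2 a ^+ 2.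
Proof.
by rewrite -[4%N]/(2 + 2)%N exprD linmx_C1_sqr -mulmxE; mx6_entrywise; ring.
Qed.

Lemma linmx_C2_annihilated y3 y4 a :
  linmx_C2 y3 y4 a ^+ 3 =
  - 2%:R ^+ 2 * (y3 ^+ 2 + y4 ^+ 2 + a ^+ 2) *: linmx_C2 y3 y4 a.
Proof. by rewrite !exprS expr0 mulr1 -!mulmxE; mx6_entrywise; ring. Qed.

Lemma linearisation_C1 y1 y2 a :
  linearisation ((2 * a) *: F1 + 1 *: F2) (mkpt 0 y1 y2 0 0 a) = linmx_C1 y1 y2 a.
Proof.
apply/matrixP => i j; rewrite linearisationE mxE.
under eq_bigr => b _ do rewrite grad_comb hessian_comb.
rewrite !big_ord_recl !big_ord0 /mkpt /= !(mul0r, mulr0, addr0, add0r).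
by ord6_cases i; ord6_cases j; rewrite /Pi_coef /Lij_coef /dl /=; ring.
Qed.

Lemma linearisation_C2 y3 y4 a :
  linearisation (0 *: F1 + 1 *: F2) (mkpt 0 0 0 y3 y4 a) = linmx_C2 y3 y4 a.
Proof.
apply/matrixP => i j; rewrite linearisationE mxE.
under eq_bigr => b _ do rewrite grad_comb hessian_comb.
rewrite !big_ord_recl !big_ord0 /mkpt /= !(mul0r, mulr0, addr0, add0r).
by ord6_cases i; ord6_cases j; rewrite /Pi_coef /Lij_coef /dl /=; ring.
Qed.

(* The six hypotheses after the first three are the components, at l34, l24, l23, l14,
   l13, l12, of al d(l34) + be dG = ta d(Cas1) + de d(Cas2). *)
Lemma lagrange_critical_locus (x0 x1 x2 x3 x4 x5 al be ta de : Rr) :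
  x0^+2 + x1^+2 + x2^+2 + x3^+2 + x4^+2 + x5^+2 = 1 ->
  x0 * x5 - x1 * x4 + x2 * x3 = 0 ->
  (al != 0) || (be != 0) ->
  al = 2 * x5 * ta + x0 * de ->
  0 = 2 * x4 * ta - x1 * de ->
  0 = 2 * x3 * ta + x2 * de ->
  2 * x2 * be = 2 * x2 * ta + x3 * de ->
  2 * x1 * be = 2 * x1 * ta - x4 * de ->
  2 * x0 * be = 2 * x0 * ta + x5 * de ->
  (x3 = 0 /\ x4 = 0) \/ (x0 = 0 /\ x1 = 0 /\ x2 = 0).
Proof.
move=> hC1 hC2 nz e5 e4 e3 e2 e1 e0.
have [bt|nbt] := eqVneq be ta.
  subst be; left; have [de0|nzde] := eqVneq de 0.
    subst de; have nzt : ta != 0.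
      by apply: contraTneq nz => t0; rewrite e5 t0 !mulr0 addr0 eqxx.
    have nz2t : 2 * ta != 0 by rewrite mulf_neq0 ?pnatr_eq0.
    by split; apply: (mulfI nz2t); rewrite mulr0; lra.
  by split; apply: (mulfI nzde); rewrite mulr0; lra.
(* contracting the last three equations with (x0, x1, x2) brings in [Cas2] *)
have hG : 2 * (be - ta) * (x0^+2 + x1^+2 + x2^+2) = de * (x0 * x5 - x1 * x4 + x2 * x3).
  transitivity (x0 * (2 * x0 * be - 2 * x0 * ta) + x1 * (2 * x1 * be - 2 * x1 * ta)
     + x2 * (2 * x2 * be - 2 * x2 * ta)); first ring.
  by rewrite e0 e1 e2; ring.
have nz2 : 2 * (be - ta) != 0 by rewrite mulf_eq0 pnatr_eq0 subr_eq0 negb_or nbt.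
have G0 : x0^+2 + x1^+2 + x2^+2 = 0 by apply: (mulfI nz2); rewrite hG hC2 !mulr0.
by right; split; [|split]; apply/eqP; rewrite -sqrf_eq0; apply/eqP; nra.
Qed.

Section CriticalPoints.
Context {x0 x1 x2 x3 x4 x5 : Rr}.
Local Notation x := (mkpt x0 x1 x2 x3 x4 x5).

Lemma inM_mkpt : inM x <->
  x0^+2 + x1^+2 + x2^+2 + x3^+2 + x4^+2 + x5^+2 = 1 /\ x0 * x5 - x1 * x4 + x2 * x3 = 0.
Proof. by rewrite /inM meval_Cas1 meval_Cas2. Qed.

Lemma rank_dF_lt2P : inM x ->
  (rank_dF x < 2)%N <-> (x3 = 0 /\ x4 = 0) \/ (x0 = 0 /\ x1 = 0 /\ x2 = 0).
Proof.
move=> /inM_mkpt[hC1 hC2]; rewrite /rank_dF rank_kermx_mul_ltP; split.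
  case=> w nzw [t /matrixP E].
  have nzw' : (w ord0 0 != 0) || (w (lift ord0 ord0) 0 != 0).
    apply: contraNT nzw => /norP[/negPn/eqP w0 /negPn/eqP w1].
    by apply/eqP/matrixP => i j; rewrite (ord1 j) mxE; case: i => [[|[|//]] ?];
      [rewrite -w0 | rewrite -w1]; congr (w _ _); apply: val_inj.
  have := E i12 0; have := E i13 0; have := E i14 0;
    have := E i23 0; have := E i24 0; have := E i34 0.
  rewrite !mxE !big_ord_recl !big_ord0 !mxE /=.
  rewrite !grad_F1 !grad_F2 !grad_Cas1 !grad_Cas2 /mkpt /=.
  rewrite !(mul1r, mul0r, add0r, addr0, mulNr, mulrN, addrN).
  exact: lagrange_critical_locus hC1 hC2 nzw'.
have nz_col (u : Rr) : \col_(i < 2) (if val i == 0%N then u else 1) != 0.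
  by apply/eqP => /matrixP/(_ (lift ord0 ord0) 0)/eqP; rewrite !mxE oner_eq0.
case=> [[-> ->]|[-> [-> ->]]].
  exists (\col_(i < 2) (if val i == 0%N then 2 * x5 else 1)) => //.
  exists (\col_(i < 2) (if val i == 0%N then 1 else 0)).
  apply/matrixP => a j; rewrite (ord1 j) !mxE !big_ord_recl !big_ord0 !mxE /=.
  rewrite !grad_F1 !grad_F2 !grad_Cas1 !grad_Cas2.
  by ord6_cases a; rewrite /mkpt /=; ring.
exists (\col_(i < 2) (if val i == 0%N then 0 else 1)) => //; exists 0.
apply/matrixP => a j; rewrite (ord1 j) !mxE !big_ord_recl !big_ord0 !mxE /=.
rewrite !grad_F1 !grad_F2.
by ord6_cases a; rewrite /mkpt /=; ring.
Qed.

Lemma critical_locus_curve : inM x ->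
  (x3 = 0 /\ x4 = 0) \/ (x0 = 0 /\ x1 = 0 /\ x2 = 0) <->
  F2.@[x] = 1 - F1.@[x] ^+ 2 \/ F2.@[x] = 0.
Proof.
rewrite meval_F1 meval_F2 => /inM_mkpt[hC1 hC2].
have sqr0 (u v w : Rr) : u ^+ 2 + v ^+ 2 + w ^+ 2 = 0 -> u = 0 /\ v = 0 /\ w = 0.
  by move=> h; split; [|split]; apply/eqP; rewrite -sqrf_eq0; apply/eqP; nra.
split=> [[[h3 h4]|[-> [-> ->]]]|[h|/sqr0]]; [left; nra | right; ring | | by right].
by left; have [|-> [->]] // := sqr0 x3 x4 0; rewrite expr0n addr0; lra.
Qed.

End CriticalPoints.

Lemma critical_pointE {p : pt} :
  inM p -> (rank_dF p < 2)%N <-> F2.@[p] = 1 - F1.@[p] ^+ 2 \/ F2.@[p] = 0.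
Proof.
rewrite [p]mkpt_eta => Mp.
exact: iff_trans (rank_dF_lt2P Mp) (critical_locus_curve Mp).
Qed.

Lemma elliptic_rank1_point_C1 y1 y2 a :
  a != 0 -> rank_dF (mkpt 0 y1 y2 0 0 a) = 1%N ->
  elliptic_rank1_point (mkpt 0 y1 y2 0 0 a).
Proof.
move=> nza r1; split=> //; exists (2 * a), 1; split; first by right; rewrite oner_eq0.
split.
  set p := mkpt 0 y1 y2 0 0 a.
  suff -> : gradcols (fun=> (2 * a) *: F1 + 1 *: F2) p =
            gradcols Cs p *m (delta_mx 0 0 : 'cV_2).
    exact: kermx_mul_eq0.
  apply/matrixP => b j; rewrite (ord1 j) !mxE !big_ord_recl big_ord0 !mxE /=.
  rewrite grad_comb grad_Cas1.
  by ord6_cases b; rewrite /mkpt /=; ring.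
rewrite linearisation_C1; apply: (elliptic_mx_annihilated (linmx_C1_annihilated _ _ _)).
  by rewrite mulf_neq0 ?pnatr_eq0.
rewrite linmx_C1_sqr; apply/eqP => /matrixP/(_ i23 i23)/eqP.
by rewrite !mxE /= oppr_eq0 mulf_eq0 pnatr_eq0 expf_eq0 (negPf nza).
Qed.

Lemma elliptic_rank1_point_C2 y3 y4 a :
  y3 ^+ 2 + y4 ^+ 2 + a ^+ 2 = 1 -> rank_dF (mkpt 0 0 0 y3 y4 a) = 1%N ->
  elliptic_rank1_point (mkpt 0 0 0 y3 y4 a).
Proof.
move=> hS r1; split=> //; exists 0, 1; split; first by right; rewrite oner_eq0.
split.
  set p := mkpt 0 0 0 y3 y4 a.
  suff -> : gradcols (fun=> 0 *: F1 + 1 *: F2) p = gradcols Cs p *m (0 : 'cV_2).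
    exact: kermx_mul_eq0.
  apply/matrixP => b j; rewrite (ord1 j) !mxE !big_ord_recl big_ord0 !mxE /= grad_comb.
  by ord6_cases b; rewrite /mkpt /=; ring.
have AE := linmx_C2_annihilated y3 y4 a; rewrite hS mulr1 in AE.
rewrite linearisation_C2; apply: (elliptic_mx_annihilated (k := 1) AE).
  by rewrite pnatr_eq0.
apply/eqP => /matrixP A0; move: hS.
have := A0 i12 i13; have := A0 i12 i14; have := A0 i13 i14; rewrite !mxE /=.
by move=> ha hy4 hy3; nra.
Qed.

Lemma rank0_value_01 : rank0_value (0, 1).
Proof.
exists (mkpt 1 0 0 0 0 0); split; first by apply/inM_mkpt; split; ring.
split; last by rewrite /Fmap meval_F1 meval_F2; congr (_, _); ring.
rewrite /rank_dF.
(* at l12 = 1 the gradients of l34 and G are those of Cas2 and Cas1 *)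
suff -> : gradcols Fs (mkpt 1 0 0 0 0 0) =
          gradcols Cs (mkpt 1 0 0 0 0 0) *m \matrix_(i, j) (val i != val j)%:R.
  by rewrite kermx_mul_eq0 mxrank0.
apply/matrixP => b j; rewrite !mxE !big_ord_recl big_ord0 !mxE.
case: j => [[|[|//]] ?] /=; rewrite ?grad_F1 ?grad_F2 !grad_Cas1 !grad_Cas2;
  by ord6_cases b; rewrite /mkpt /=; ring.
Qed.

Lemma critical_rank1_elliptic (p : pt) :
  inM p -> rank_dF p = 1%N -> Fmap p != (0, 1) -> elliptic_rank1_point p.
Proof.
rewrite [p]mkpt_eta.
move: (p i12) (p i13) (p i14) (p i23) (p i24) (p i34) => x0 x1 x2 x3 x4 x5 Mp r1.
have [hC1 hC2] := inM_mkpt.1 Mp.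
have /(rank_dF_lt2P Mp)[[h3 h4]|[h0 [h1 h2]]] :
    (rank_dF (mkpt x0 x1 x2 x3 x4 x5) < 2)%N by rewrite r1.
  subst; rewrite /Fmap meval_F1 meval_F2 => not01.
  have nzx5 : x5 != 0.
    apply: contraNneq not01 => x50; apply/eqP; rewrite x50; congr (_, _).
    by move: hC1; rewrite x50 expr0n /=; lra.
  have x00 : x0 = 0 by apply: (mulIf nzx5); lra.
  by subst; apply: elliptic_rank1_point_C1.
subst=> _; apply: elliptic_rank1_point_C2 r1.
by move: hC1; rewrite expr0n /=; lra.
Qed.

Theorem proposition7 :
  (forall c : Rr * Rr,
     critical_value c <->
     (in_image c /\ (c.2 = 1 - c.1 ^+ 2 \/ c.2 = 0))) /\
  (forall c : Rr * Rr,
     in_image c -> (c.2 = 1 - c.1 ^+ 2 \/ c.2 = 0) ->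
     ~ rank0_value c -> codim1_elliptic_value c).
Proof.
split=> [c|c _ _ not_rank0 p [Mp rp] Fpc].
  split=> [[p [[Mp /(critical_pointE Mp) crit] <-]]|[[p [Mp <-]] /(critical_pointE Mp)]].
    by split; first exists p.
  by exists p.
apply: critical_rank1_elliptic => //.
  apply/eqP; rewrite eqn_leq -ltnS rp lt0n; apply/negP => /eqP r0.
  by apply: not_rank0; exists p.
by apply: contra_not_neq not_rank0; rewrite -Fpc => ->; exact: rank0_value_01.
Qed.
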